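(* Let $\lambda>0$. For every irrational $\alpha$ and every $\theta\in\mathbb{T}_0$, neither $\lambda$ nor $-\lambda$ is an eigenvalue of $\mathcal{H}_\theta$.
   Context: $\mathbb{T}=\mathbb{R}/\mathbb{Z}$, $\mathbb{T}_0=\{\theta\in\mathbb{T}:\cos 2\pi(n\alpha+\theta)\neq 0\ \forall n\in\mathbb{Z}\}$. For $\theta\in\mathbb{T}$, $n\in\mathbb{Z}$ put $v(\theta,n)=\cos2\pi((n-1)\alpha+\theta)$ if $n$ is odd and $v(\theta,n)=\cos 2\pi(n\alpha+\theta)$ if $n$ is even; $c(\theta,n)=\lambda$ if $n$ is odd and $c(\theta,n)=\cos2\pi(n\alpha+\theta)$ if $n$ is even. For $\theta\in\mathbb{T}_0$, $\mathcal{H}_\theta$ acts on $\ell^2(\mathbb{Z})$ by $(\mathcal{H}_\theta u)(n)=c(\theta,n)u(n+1)+c(\theta,n-1)u(n-1)+v(\theta,n)u(n)$. *)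

From Stdlib Require Import Reals ZArith.
From Coquelicot Require Import Coquelicot.
Open Scope R_scope.

(* T = R/Z: a point theta of T is represented by a real number; all
   quantities below are 1-periodic in theta. *)

Definition T0 (alpha theta : R) : Prop :=
  forall n : Z, cos (2 * PI * (IZR n * alpha + theta)) <> 0.

Definition vpot (alpha theta : R) (n : Z) : R :=
  if Z.odd n then cos (2 * PI * (IZR (n - 1) * alpha + theta))
  else cos (2 * PI * (IZR n * alpha + theta)).

Definition chop (lambda alpha theta : R) (n : Z) : R :=
  if Z.odd n then lambda
  else cos (2 * PI * (IZR n * alpha + theta)).

Definition Hop (lambda alpha theta : R) (u : Z -> C) (n : Z) : C :=
  (RtoC (chop lambda alpha theta n) * u (n + 1)%Z
   + RtoC (chop lambda alpha theta (n - 1)) * u (n - 1)%Z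
   + RtoC (vpot alpha theta n) * u n)%C.

Definition l2Z (u : Z -> C) : Prop :=
  ex_series (fun k : nat => (Cmod (u (Z.of_nat k)))^2 + (Cmod (u (- Z.of_nat k)%Z))^2).

Definition is_eigenvalue (lambda alpha theta E : R) : Prop :=
  exists u : Z -> C, l2Z u /\ (exists n : Z, u n <> 0%C) /\
    forall n : Z, Hop lambda alpha theta u n = (RtoC E * u n)%C.

Definition irrational (x : R) : Prop :=
  ~ exists (p q : Z), q <> 0%Z /\ x = IZR p / IZR q.

From Stdlib Require Import Reals ZArith Lia Lra.
From Coquelicot Require Import Coquelicot.
Open Scope R_scope.

(* Group the sites in pairs (2m, 2m+1) and put w_m = cos 2pi(2m alpha + theta),
   the common value of c(2m), v(2m) and v(2m+1).  For an eigenvector u with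
   eigenvalue E = sigma lambda, |sigma| = 1, the eigenvalue equations at 2m and
   2m+1 express K_m = w_m (u(2m) + u(2m+1)) in two ways, which give
   K_{m+1} = - sigma K_m.  So |K_m| is constant, while it is at most
   |u(2m)| + |u(2m+1)|, which tends to 0 for u in l^2: hence K = 0.  Since
   theta is in T_0, w_m <> 0, so u(2m+1) = - u(2m), and then K = 0 also gives
   u(2m+2) = sigma u(2m+1), so |u(2m)| is constant and must vanish. *)

Lemma Z_succ_invariant_const {A : Type} (f : Z -> A) :
  (forall m, f (m + 1)%Z = f m) -> forall m, f m = f 0%Z.
Proof.
  intros Hf m. induction m using Z.peano_ind.
  - reflexivity.
  - rewrite <- Z.add_1_r, Hf. exact IHm.
  - rewrite <- IHm, <- (Hf (Z.pred m)). f_equal. lia.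
Qed.

Lemma l2Z_tail_small (u : Z -> C) : l2Z u ->
  forall eps, 0 < eps -> exists N : Z, forall n, (N <= n)%Z -> Cmod (u n) < eps.
Proof.
  intros Hu eps Heps.
  apply ex_series_lim_0, is_lim_seq_spec in Hu.
  assert (Heps2 : 0 < eps * eps) by nra.
  destruct (Hu (mkposreal _ Heps2)) as [N HN]; simpl in HN.
  exists (Z.of_nat N). intros n Hn.
  specialize (HN (Z.to_nat n) ltac:(lia)).
  rewrite Z2Nat.id in HN by lia.
  pose proof (Cmod_ge_0 (u n)). pose proof (Cmod_ge_0 (u (- n)%Z)).
  rewrite Rminus_0_r, Rabs_pos_eq in HN by nra.
  nra.
Qed.

Lemma l2Z_dominated_const_Cmod_eq0 (u K : Z -> C) : l2Z u ->
  (forall m, Cmod (K (m + 1)%Z) = Cmod (K m)) ->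
  (forall m, Cmod (K m) <= Cmod (u (2 * m)%Z) + Cmod (u (2 * m + 1)%Z)) ->
  forall m, K m = 0%C.
Proof.
  intros Hu Hconst Hdom m. apply Cmod_eq_0.
  rewrite (Z_succ_invariant_const (fun m => Cmod (K m)) Hconst m).
  destruct (Req_dec (Cmod (K 0%Z)) 0) as [|Hpos]; [assumption|exfalso].
  pose proof (Cmod_ge_0 (K 0%Z)).
  destruct (l2Z_tail_small u Hu (Cmod (K 0%Z) / 2)) as [N HN]; [lra|].
  set (m0 := Z.abs N).
  pose proof (HN (2 * m0)%Z ltac:(lia)). pose proof (HN (2 * m0 + 1)%Z ltac:(lia)).
  pose proof (Hdom m0).
  rewrite (Z_succ_invariant_const (fun m => Cmod (K m)) Hconst m0) in *.
  lra.
Qed.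

Lemma RtoC_neq0 (r : R) : r <> 0 -> RtoC r <> 0%C.
Proof. intros Hr E. apply Hr. injection E. auto. Qed.

Lemma Cmult_eq0_r (a b : C) : a <> 0%C -> (a * b)%C = 0%C -> b = 0%C.
Proof.
  intros Ha Hab. destruct (Ceq_dec b 0) as [|Hb]; [assumption|].
  exfalso. exact (Cmult_neq_0 _ _ Ha Hb Hab).
Qed.

Section SignedEigenvector.

Variables lambda alpha theta sigma : R.
Variable u : Z -> C.
Hypothesis Hsigma : Rabs sigma = 1.
Hypothesis Heig : forall n, Hop lambda alpha theta u n = (RtoC (sigma * lambda) * u n)%C.

Let w (m : Z) : R := cos (2 * PI * (IZR (2 * m) * alpha + theta)).
Let K (m : Z) : C := (RtoC (w m) * (u (2 * m)%Z + u (2 * m + 1)%Z))%C.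

Lemma K_from_odd_site m :
  K m = (RtoC sigma * RtoC lambda * u (2 * m + 1)%Z - RtoC lambda * u (2 * m + 2)%Z)%C.
Proof.
  pose proof (Heig (2 * m + 1)%Z) as H.
  unfold Hop, chop, vpot in H.
  rewrite Z.odd_odd in H.
  replace (2 * m + 1 - 1)%Z with (2 * m)%Z in H by ring.
  replace (2 * m + 1 + 1)%Z with (2 * m + 2)%Z in H by ring.
  rewrite Z.odd_even, RtoC_mult in H.
  rewrite <- H. unfold K, w. ring.
Qed.

Lemma K_from_even_site m :
  K m = (RtoC sigma * RtoC lambda * u (2 * m)%Z - RtoC lambda * u (2 * m - 1)%Z)%C.
Proof.
  pose proof (Heig (2 * m)%Z) as H.
  unfold Hop, chop, vpot in H.
  rewrite Z.odd_even in H.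
  replace (2 * m - 1)%Z with (2 * (m - 1) + 1)%Z in H by ring.
  rewrite Z.odd_odd, RtoC_mult in H.
  replace (2 * (m - 1) + 1)%Z with (2 * m - 1)%Z in H by ring.
  rewrite <- H. unfold K, w. ring.
Qed.

Lemma sigma_sqr : (RtoC sigma * RtoC sigma = 1)%C.
Proof.
  rewrite <- RtoC_mult. f_equal.
  rewrite <- (Rabs_pos_eq (sigma * sigma)) by nra.
  rewrite Rabs_mult, Hsigma. ring.
Qed.

Lemma K_succ m : K (m + 1)%Z = (- RtoC sigma * K m)%C.
Proof.
  rewrite K_from_even_site, K_from_odd_site.
  replace (2 * (m + 1))%Z with (2 * m + 2)%Z by ring.
  replace (2 * m + 2 - 1)%Z with (2 * m + 1)%Z by ring.
  transitivity (RtoC sigma * RtoC lambda * u (2 * m + 2)%Z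
    - RtoC sigma * RtoC sigma * RtoC lambda * u (2 * m + 1)%Z)%C.
  - rewrite sigma_sqr. ring.
  - ring.
Qed.

Lemma K_eq0 : l2Z u -> forall m, K m = 0%C.
Proof.
  intro Hu. apply (l2Z_dominated_const_Cmod_eq0 u K Hu).
  - intro m. rewrite K_succ, Cmod_mult, Cmod_opp, Cmod_R, Hsigma. ring.
  - intro m. unfold K. rewrite Cmod_mult, Cmod_R.
    assert (Hw : Rabs (w m) <= 1) by (apply Rabs_le, COS_bound).
    pose proof (Rabs_pos (w m)).
    pose proof (Cmod_triangle (u (2 * m)%Z) (u (2 * m + 1)%Z)).
    pose proof (Cmod_ge_0 (u (2 * m)%Z + u (2 * m + 1)%Z)).
    nra.
Qed.

Lemma signed_eigenvector_eq0 :
  0 < lambda -> T0 alpha theta -> l2Z u -> forall n, u n = 0%C.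
Proof.
  intros Hlambda HT Hu.
  assert (Hodd : forall m, u (2 * m + 1)%Z = (- u (2 * m)%Z)%C).
  { intro m.
    assert (Hsum : (u (2 * m)%Z + u (2 * m + 1)%Z = 0)%C).
    { apply (Cmult_eq0_r (RtoC (w m))); [apply RtoC_neq0, HT | apply (K_eq0 Hu)]. }
    transitivity (u (2 * m)%Z + u (2 * m + 1)%Z - u (2 * m)%Z)%C; [ring|].
    rewrite Hsum. ring. }
  assert (Heven : forall m, u (2 * m + 2)%Z = (RtoC sigma * u (2 * m + 1)%Z)%C).
  { intro m.
    assert (Hdiff : (RtoC lambda * (RtoC sigma * u (2 * m + 1)%Z - u (2 * m + 2)%Z) = 0)%C).
    { rewrite <- (K_eq0 Hu m), K_from_odd_site. ring. }
    apply Cmult_eq0_r in Hdiff; [|apply RtoC_neq0; lra].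
    transitivity (RtoC sigma * u (2 * m + 1)%Z
      - (RtoC sigma * u (2 * m + 1)%Z - u (2 * m + 2)%Z))%C; [ring|].
    rewrite Hdiff. ring. }
  assert (Hzero : forall m, u (2 * m)%Z = 0%C).
  { apply (l2Z_dominated_const_Cmod_eq0 u (fun m => u (2 * m)%Z) Hu).
    - intro m. replace (2 * (m + 1))%Z with (2 * m + 2)%Z by ring.
      rewrite Heven, Hodd, Cmod_mult, Cmod_opp, Cmod_R, Hsigma. ring.
    - intro m. pose proof (Cmod_ge_0 (u (2 * m + 1)%Z)). lra. }
  intro n. destruct (Z.Even_or_Odd n) as [[m ->]|[m ->]].
  - apply Hzero.
  - rewrite Hodd, Hzero. ring.
Qed.

End SignedEigenvector.

Theorem lemma3p4 (lambda alpha theta : R) :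
  0 < lambda -> irrational alpha -> T0 alpha theta ->
  ~ is_eigenvalue lambda alpha theta lambda /\
  ~ is_eigenvalue lambda alpha theta (- lambda).
Proof.
  intros Hlambda _ HT.
  split; intros [u [Hu [[n Hn] Heig]]]; apply Hn.
  - apply (signed_eigenvector_eq0 lambda alpha theta 1 u Rabs_R1); auto.
    intro k. replace (1 * lambda) with lambda by ring. apply Heig.
  - apply (signed_eigenvector_eq0 lambda alpha theta (-1) u Rabs_m1); auto.
    intro k. replace (-1 * lambda) with (- lambda) by ring. apply Heig.
Qed.
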